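(* Let $\lambda=(\lambda_1,\dots,\lambda_m)$ be a Young diagram with $n$ boxes and let $l\ge 1$ be an integer. Then $$M_{\lambda,2l}\le n(\lambda_1-1)^l\lambda_1^{\,l-1}.$$
   Context: For a Young diagram $\lambda=(\lambda_1,\dots,\lambda_m)$ with $\lambda_1\ge\dots\ge\lambda_m\ge1$, $\sum\lambda_i=n$, and an integer $l\ge 0$, define $M_{\lambda,2l}=\sum_{j=1}^m\big\{(\lambda_j-j)^l(\lambda_j-j+1)^l-j^l(j-1)^l\big\}$. *)

From mathcomp Require Import all_boot all_order all_algebra.
Set Implicit Arguments. Unset Strict Implicit. Unset Printing Implicit Defensive.
Import Order.TTheory GRing.Theory Num.Theory.
Local Open Scope ring_scope.

Definition young (la : seq nat) : bool :=
  sorted geq la && all (fun x => 0 < x)%N la.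

(* M_{lambda,2l} = sum_{j=1}^m ((la_j - j)^l (la_j - j + 1)^l - j^l (j-1)^l),
   computed in int (la_j - j can be negative).  Index j (1-based) is i.+1
   for i : 'I_(size la), la_j = nth 0 la i. *)
Definition M (la : seq nat) (l : nat) : int :=
  \sum_(i < size la)
    (((nth 0%N la i)%:Z - (i.+1)%:Z) ^+ l * ((nth 0%N la i)%:Z - (i.+1)%:Z + 1) ^+ l
     - (i.+1)%:Z ^+ l * (i%:Z) ^+ l).

From mathcomp Require Import all_boot all_order all_algebra.
From mathcomp Require Import zify.
Import Order.TTheory GRing.Theory Num.Theory.
Local Open Scope ring_scope.

(* The bound holds row by row.  Write the j-th summand of M_{lambda,2l}
   (j = i+1) as (a (a+1))^l - (j (j-1))^l with a = lambda_j - j, and let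
   L = lambda_1 be the largest part.
   - If j <= lambda_j, then 0 <= a (a+1) <= (L-1) lambda_j, and since
     lambda_j <= L we get lambda_j^l <= lambda_j L^(l-1); dropping the
     subtracted nonnegative term, the summand is at most
     lambda_j (L-1)^l L^(l-1).
   - If j > lambda_j, then a < 0 and a (a+1) = (j-lambda_j)(j-lambda_j-1)
     lies between 0 and j (j-1), so the summand is <= 0.
   In both cases the summand is at most lambda_j (L-1)^l L^(l-1), and
   summing over the rows gives n (L-1)^l L^(l-1) since the parts add up
   to n. *)

Lemma exp_le_mul_exp (R : numDomainType) (p L : R) (l : nat) :
  0 <= p -> p <= L -> (1 <= l)%N -> p ^+ l <= p * L ^+ l.-1.
Proof.
move=> p0 pL; case: l => // l _.
by rewrite exprS ler_wpM2l // lerXn2r // ?nnegrE (le_trans p0).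
Qed.

Lemma short_row_bound (p L i l : nat) :
  (i < p)%N -> (p <= L)%N -> (1 <= l)%N ->
  (p%:Z - i.+1%:Z) ^+ l * (p%:Z - i.+1%:Z + 1) ^+ l - i.+1%:Z ^+ l * i%:Z ^+ l
  <= p%:Z * (L%:Z - 1) ^+ l * L%:Z ^+ l.-1.
Proof.
move=> ip pL l1; rewrite -exprMn.
set a := p%:Z - i.+1%:Z.
have prod_nonneg : 0 <= a * (a + 1) by rewrite /a; nia.
have prod_le : a * (a + 1) <= (L%:Z - 1) * p%:Z by rewrite /a; nia.
have L_pos : 1 <= L%:Z by lia.
apply: le_trans (_ : (a * (a + 1)) ^+ l <= _).
  by rewrite gerBl mulr_ge0 ?exprn_ge0.
apply: le_trans (_ : ((L%:Z - 1) * p%:Z) ^+ l <= _).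
  by rewrite lerXn2r ?nnegrE // (le_trans prod_nonneg).
rewrite exprMn [p%:Z * _]mulrC -mulrA ler_wpM2l ?exprn_ge0 ?subr_ge0 //.
by rewrite exp_le_mul_exp // lez_nat ltnW.
Qed.

Lemma long_row_nonpos (p i l : nat) :
  (0 < p)%N -> (p <= i)%N ->
  (p%:Z - i.+1%:Z) ^+ l * (p%:Z - i.+1%:Z + 1) ^+ l - i.+1%:Z ^+ l * i%:Z ^+ l <= 0.
Proof.
move=> p0 pi; rewrite subr_le0 -!exprMn lerXn2r ?nnegrE //; nia.
Qed.

Lemma young_part_bounds {la : seq nat} {i : nat} :
  (i < size la)%N -> young la ->
  (0 < nth 0%N la i)%N && (nth 0%N la i <= head 0%N la)%N.
Proof.
move=> i_lt /andP [sorted_la pos_la]; apply/andP; split.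
  by apply: (allP pos_la); apply: mem_nth.
have geq_trans : transitive geq by move=> b a c ba cb; apply: leq_trans cb ba.
rewrite -nth0; apply: (sorted_leq_nth geq_trans leqnn 0%N sorted_la) => //.
by rewrite inE (leq_ltn_trans _ i_lt).
Qed.

Lemma sumn_nth (s : seq nat) : sumn s = (\sum_(i < size s) nth 0%N s i)%N.
Proof. by rewrite sumnE (big_nth 0%N) big_mkord. Qed.

Theorem lemma5p10 (la : seq nat) (n l : nat) :
  young la -> sumn la = n -> (1 <= l)%N ->
  M la l <= n%:Z * ((head 0%N la)%:Z - 1) ^+ l * (head 0%N la)%:Z ^+ l.-1.
Proof.
move=> young_la <- l1.
rewrite sumn_nth (big_morph Posz PoszD (erefl _)) !mulr_suml /M; apply: ler_sum => i _.
have /andP [part_pos part_le] := young_part_bounds (ltn_ord i) young_la.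
have [ip | pi] := ltnP i (nth 0%N la i).
  exact: short_row_bound.
apply: le_trans (long_row_nonpos _ _ l part_pos pi) _.
by rewrite !mulr_ge0 ?exprn_ge0 // subr_ge0 lez_nat (leq_trans part_pos).
Qed.
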